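(* In the setting described in the context, suppose there exists $\mathbf{w}\in S_m$ with $f(\mathbf{w})>0$. Then for any $\mathbf{w}_0=(w_1',\ldots,w_m')^T\in S_m$ with $0<w_i'<1$ for each $i$, $f(\mathbf{w}_0)>0$.
   Context: Given a model matrix $\mathbf{X}\in\mathbb{R}^{m\times p}$ (rows $\mathbf{q}(\mathbf{x}_i)^T$ for distinct design points under a generalized linear model, $m\ge2$, $p\ge2$) and numbers $\nu_1,\ldots,\nu_m\ge0$ (where $\nu_i=(\partial\mu_i/\partial\eta_i)^2/\mathrm{Var}(Y_i)$), let $S_m=\{\mathbf{w}\in\mathbb{R}^m:w_i\ge0,\sum_iw_i=1\}$, and for $\mathbf{w}\in S_m$ let $\mathbf{W}=\mathrm{diag}\{w_1\nu_1,\ldots,w_m\nu_m\}$ and $f(\mathbf{w})=|\mathbf{X}^T\mathbf{W}\mathbf{X}|$. *)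

From mathcomp Require Import all_boot all_order all_algebra.
Set Implicit Arguments. Unset Strict Implicit. Unset Printing Implicit Defensive.
Import Order.TTheory GRing.Theory Num.Theory.
Local Open Scope ring_scope.

Definition in_simplex (R : realFieldType) (m : nat) (w : 'I_m -> R) : Prop :=
  (forall i, 0 <= w i) /\ \sum_(i < m) w i = 1.

Definition Wmat (R : realFieldType) (m : nat) (w nu : 'I_m -> R) : 'M[R]_m :=
  diag_mx (\row_i (w i * nu i)).

Definition fdet (R : realFieldType) (m p : nat) (X : 'M[R]_(m, p))
  (nu w : 'I_m -> R) : R :=
  \det (X^T *m Wmat w nu *m X).

(* The quadratic form of X^T W X is u |-> \sum_i w_i nu_i ((u X^T)_i)^2, so
   when all weights w0_i are positive its null vectors are null vectors for
   every weight vector w >= 0.  Nonsingularity at one w in the simplex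
   therefore makes X^T W0 X positive definite, and a symmetric positive
   definite matrix has positive determinant: eliminating its first row and
   column by a congruence leaves the Schur complement, again symmetric
   positive definite. *)

From mathcomp Require Import all_boot all_order all_algebra.
Import Order.TTheory GRing.Theory Num.Theory.
Local Open Scope ring_scope.
Set Implicit Arguments.
Unset Strict Implicit.
Unset Printing Implicit Defensive.

Section PositiveDefinite.
Variable R : realFieldType.

Definition posdefmx {n} (A : 'M[R]_n) : Prop :=
  forall u : 'rV_n, u != 0 -> 0 < (u *m A *m u^T) 0 0.

Lemma posdefmx_congr n (A E : 'M[R]_n) :
  E \in unitmx -> posdefmx A -> posdefmx (E *m A *m E^T).
Proof.
move=> Eu pA u u0.
have -> : u *m (E *m A *m E^T) *m u^T = u *m E *m A *m (u *m E)^T.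
  by rewrite trmx_mul !mulmxA.
apply: pA; apply: contraNneq u0 => uE0.
by rewrite -(mulmxK Eu u) uE0 mul0mx.
Qed.

Lemma posdefmx_drsub n1 n2 (A : 'M[R]_(n1 + n2)) :
  posdefmx A -> posdefmx (drsubmx A).
Proof.
move=> pA v v0; have := pA (row_mx 0 v).
rewrite row_mx_eq0 eqxx (negbTE v0) => /(_ isT).
rewrite -{1}[A]submxK mul_row_block !mul0mx !add0r tr_row_mx mul_row_col.
by rewrite trmx0 mulmx0 add0r.
Qed.

Lemma posdefmx_diag_gt0 n (A : 'M[R]_n) i : posdefmx A -> 0 < A i i.
Proof.
move=> pA; have := pA (delta_mx 0 i); rewrite -rowE trmx_delta -colE !mxE.
by apply; apply/eqP => /matrixP /(_ 0 i) /eqP; rewrite !mxE !eqxx oner_eq0.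
Qed.

Lemma schur_congruence n (a : R) (b : 'rV[R]_n) (D : 'M[R]_n) : a != 0 ->
  let E := block_mx 1%:M 0 (- a^-1 *: b^T) 1%:M in
  E *m block_mx a%:M b b^T D *m E^T =
  block_mx a%:M 0 0 (D - a^-1 *: (b^T *m b)).
Proof.
move=> a0 E.
have elim_col : - a^-1 *: b^T *m a%:M + b^T = 0.
  by rewrite mul_mx_scalar scalerA mulrN mulfV // scaleN1r addNr.
have elim_row : a%:M *m (- a^-1 *: b^T)^T + b = 0.
  by rewrite linearZ /= trmxK mul_scalar_mx scalerA mulrN mulfV // scaleN1r addNr.
rewrite /E tr_block_mx !mulmx_block !trmx1 !trmx0 !mulmx1 !mulmx0 !mul1mx !mul0mx.
rewrite !addr0 elim_col elim_row mul0mx add0r addrC.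
by rewrite -scalemxAl scaleNr.
Qed.

Lemma posdefmx_det_gt0 n (A : 'M[R]_n) : A^T = A -> posdefmx A -> 0 < \det A.
Proof.
elim: n A => [|n IH] A symA posA; first by rewrite det_mx00.
pose a := A 0 0; pose b : 'rV_n := ursubmx (A : 'M_(1 + n)).
pose D := drsubmx (A : 'M_(1 + n)).
have Ablock : A = block_mx a%:M b b^T D :> 'M_(1 + n).
  rewrite -{1}(submxK (A : 'M_(1 + n))) [ulsubmx _]mx11_scalar trmx_ursub symA.
  by congr block_mx; rewrite !mxE; congr (_ %:M); congr (A _ _); exact: val_inj.
have a_gt0 : 0 < a := posdefmx_diag_gt0 0 posA.
have := schur_congruence b D (lt0r_neq0 a_gt0).
set E := block_mx _ _ _ _; set S := D - _ => EAE.
have detE : \det E = 1 by rewrite det_lblock !det1 mulr1.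
have Eunit : E \in unitmx by rewrite unitmxE detE unitr1.
have -> : \det A = a * \det S.
  have := congr1 determinant EAE.
  by rewrite -Ablock !det_mulmx det_tr detE mul1r mulr1 det_ublock det_scalar1.
apply: mulr_gt0 a_gt0 (IH S _ _).
  by rewrite /S linearB /= linearZ /= trmx_mul trmxK /D trmx_drsub symA.
have := posdefmx_drsub (posdefmx_congr Eunit posA).
by rewrite Ablock EAE block_mxKdr.
Qed.

End PositiveDefinite.

Section InformationMatrix.
Variables (R : realFieldType) (m p : nat) (X : 'M[R]_(m, p)) (nu : 'I_m -> R).

Definition info_mx (w : 'I_m -> R) : 'M[R]_p := X^T *m Wmat w nu *m X.

Lemma tr_info_mx w : (info_mx w)^T = info_mx w.
Proof. by rewrite /info_mx !trmx_mul trmxK /Wmat tr_diag_mx mulmxA. Qed.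

Lemma info_mx_quadE w (u : 'rV_p) :
  (u *m info_mx w *m u^T) 0 0 = \sum_i w i * nu i * (u *m X^T) 0 i ^+ 2.
Proof.
rewrite /info_mx !mulmxA -(mulmxA _ X) -[X *m u^T]trmxK trmx_mul trmxK.
rewrite /Wmat mul_mx_diag mxE; apply: eq_bigr => i _.
by rewrite !mxE mulrAC -expr2 mulrC.
Qed.

Lemma info_mx_quad_eq0 w (u : 'rV_p) : (forall i, 0 <= w i * nu i) ->
  (u *m info_mx w *m u^T) 0 0 = 0 -> u *m info_mx w = 0.
Proof.
move=> wnu_ge0; rewrite info_mx_quadE.
move=> /(psumr_eq0P (fun i _ => mulr_ge0 (wnu_ge0 i) (sqr_ge0 _))) term0.
have {}term0 i : w i * nu i * (u *m X^T) 0 i = 0.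
  have /eqP := term0 i isT.
  by rewrite expr2 mulrA mulf_eq0 => /orP [/eqP // | /eqP ->]; rewrite mulr0.
have yW0 : u *m X^T *m Wmat w nu = 0.
  apply/matrixP => k i; rewrite /Wmat mul_mx_diag mxE [(\row_j _) _ _]mxE.
  by rewrite ord1 mulrC term0 mxE.
by rewrite /info_mx !mulmxA yW0 mul0mx.
Qed.

Lemma info_mx_posdef w w0 : (forall i, 0 <= nu i) -> (forall i, 0 <= w i) ->
  (forall i, 0 < w0 i) -> \det (info_mx w) != 0 -> posdefmx (info_mx w0).
Proof.
move=> nu_ge0 w_ge0 w0_gt0 detw u u0.
have term_ge0 v i : 0 <= v i -> 0 <= v i * nu i * (u *m X^T) 0 i ^+ 2.
  by move=> v_ge0; rewrite mulr_ge0 ?sqr_ge0 ?mulr_ge0.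
have quad_w0_ge0 : 0 <= (u *m info_mx w0 *m u^T) 0 0.
  by rewrite info_mx_quadE sumr_ge0 // => i _; apply/term_ge0/ltW.
rewrite lt_def quad_w0_ge0 andbT; apply: contra_neq u0 => quad_w0_eq0.
have quad_w_eq0 : (u *m info_mx w *m u^T) 0 0 = 0.
  move: quad_w0_eq0; rewrite !info_mx_quadE.
  move=> /(psumr_eq0P (fun i _ => term_ge0 _ _ (ltW (w0_gt0 i)))) term0.
  rewrite big1 // => i _; have /eqP := term0 i isT.
  by rewrite -mulrA mulf_eq0 gt_eqF //= -mulrA => /eqP ->; rewrite mulr0.
have unit_w : info_mx w \in unitmx by rewrite unitmxE unitfE.
rewrite -(mulmxK unit_w u) (info_mx_quad_eq0 _ quad_w_eq0) ?mul0mx //.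
by move=> i; rewrite mulr_ge0.
Qed.

End InformationMatrix.

Theorem lemma5 (R : realFieldType) (m p : nat) (X : 'M[R]_(m, p))
  (nu : 'I_m -> R) :
  (2 <= m)%N -> (2 <= p)%N ->
  (forall i, 0 <= nu i) ->
  (exists w : 'I_m -> R, in_simplex w /\ 0 < fdet X nu w) ->
  forall w0 : 'I_m -> R, in_simplex w0 -> (forall i, 0 < w0 i < 1) ->
  0 < fdet X nu w0.
Proof.
move=> _ _ nu_ge0 [w [[w_ge0 _] fw_gt0]] w0 _ w0_in.
have w0_gt0 i : 0 < w0 i by case/andP: (w0_in i).
apply: (posdefmx_det_gt0 (tr_info_mx X nu w0)).
exact: info_mx_posdef nu_ge0 w_ge0 w0_gt0 (lt0r_neq0 fw_gt0).
Qed.
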